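(* Let $1\le p,q<\infty$ and $\theta>0$, and let $g:\mathbb R\to\mathbb R$ be a measurable function with compact support. Then the multiplication operator $M_g f=fg$ is bounded from $l^{q),\theta}(L^p)$ to $l^{q),\theta}(L^p)$ if and only if $g\in L^\infty(\mathbb R)$. Moreover, in that case $\|M_g\|=\|g\|_{L^\infty}$.
   Context: Index set $\mathbb Z$, $I_k=[k,k+1)$. The space $l^{q),\theta}(L^p)$ consists of complex-valued measurable $f$ on $\mathbb R$ with $f\chi_{I_k}\in L^p$ for all $k\in\mathbb Z$ and $$\|f\|_{p,q),\theta}:=\sup_{\varepsilon>0}\Big(\varepsilon^{\theta}\sum_{k\in\mathbb Z}\Big(\int_k^{k+1}|f(x)|^p\,dx\Big)^{\frac{q(1+\varepsilon)}{p}}\Big)^{\frac{1}{q(1+\varepsilon)}}<\infty.$$ $\|M_g\|$ denotes the operator norm on this space. *)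

From HB Require Import structures.
From mathcomp Require Import all_boot all_order all_algebra.
From mathcomp Require Import all_classical all_reals all_analysis.
From mathcomp Require complex.
From mathcomp Require Import ess_sup_inf.
Set Implicit Arguments. Unset Strict Implicit. Unset Printing Implicit Defensive.
Import Order.TTheory GRing.Theory Num.Theory.
Import numFieldNormedType.Exports.
Local Open Scope classical_set_scope.
Local Open Scope ring_scope.
Local Open Scope ereal_scope.

Section Space.
Variable R : realType.
Local Notation mu := (@lebesgue_measure R).
Local Notation C := (complex.complex R).

Definition cmod (z : C) : R := Num.sqrt (complex.Re z ^+ 2 + complex.Im z ^+ 2)%R.

Definition cmeasurable (f : R -> C) : Prop :=
  measurable_fun setT (fun x => complex.Re (f x)) /\
  measurable_fun setT (fun x => complex.Im (f x)).

Definition Ik (k : int) : set R := `[(k%:~R : R), (k%:~R + 1)%R[%classic.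

Definition loc_int (p : R) (f : R -> C) (k : int) : \bar R :=
  \int[mu]_(x in Ik k) ((cmod (f x)) `^ p)%:E.

Definition gl_norm (p q theta : R) (f : R -> C) : \bar R :=
  ereal_sup [set ((eps `^ theta)%:E *
                   \esum_(k in [set: int]) (loc_int p f k `^ (q * (1 + eps) / p)))
                  `^ (1 / (q * (1 + eps))) | eps in [set e : R | (0 < e)%R]].

Definition in_gl (p q theta : R) (f : R -> C) : Prop :=
  cmeasurable f /\ (forall k : int, loc_int p f k < +oo) /\ gl_norm p q theta f < +oo.

Definition Mg (g : R -> R) (f : R -> C) : R -> C :=
  fun x => complex.Complex (complex.Re (f x) * g x)%R (complex.Im (f x) * g x)%R.

Definition Mg_bounded (p q theta : R) (g : R -> R) : Prop :=
  (forall f, in_gl p q theta f -> in_gl p q theta (Mg g f)) /\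
  exists c : R, forall f, in_gl p q theta f ->
    gl_norm p q theta (Mg g f) <= c%:E * gl_norm p q theta f.

Definition Mg_opnorm (p q theta : R) (g : R -> R) : \bar R :=
  ereal_inf [set c%:E | c in [set c : R | (0 <= c)%R /\ forall f, in_gl p q theta f ->
    gl_norm p q theta (Mg g f) <= c%:E * gl_norm p q theta f]].

Definition Linf_norm (g : R -> R) : \bar R := ess_sup mu (fun x => (`|g x|)%:E).

End Space.

From HB Require Import structures.
From mathcomp Require Import all_boot all_order all_algebra.
From mathcomp Require Import all_classical all_reals all_analysis.
From mathcomp Require complex.
From mathcomp Require Import ring lra zify.
From mathcomp Require Import measurable_realfun ess_sup_inf.
Set Implicit Arguments. Unset Strict Implicit. Unset Printing Implicit Defensive.
Import Order.TTheory GRing.Theory Num.Theory.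
Import numFieldNormedType.Exports.
Local Open Scope classical_set_scope.
Local Open Scope ring_scope.
Local Open Scope ereal_scope.

(* If |g| <= c almost everywhere, every block integral of |fg|^p
   is at most c^p times the block integral of |f|^p, and the norm is monotone
   in the block integrals and homogeneous, so ||M_g|| <= ||g||_oo.
   Conversely, if 0 < N < ||g||_oo, the set {|g| > N} meets some block I_k in
   a set E of positive measure.  The indicator of E has a single nonzero block
   integral, at most 1, so it lies in the space with 0 < ||1_E|| < oo, and
   ||M_g 1_E|| >= N ||1_E||; hence every bound for M_g is at least N. *)

Lemma ge0_le_poweR (R : realType) (x y : \bar R) (r : R) :
  (0 <= r)%R -> 0 <= x -> x <= y -> x `^ r <= y `^ r.
Proof.
move=> r0 x0 xy; apply: gt0_ler_poweR => //; rewrite in_itv /= ?x0 ?leey //.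
by rewrite (le_trans x0 xy).
Qed.

Lemma le_esumZl (R : realType) (T : choiceType) (I : set T) (a : T -> \bar R)
    (c : R) : (0 <= c)%R -> (forall i, 0 <= a i) ->
  \esum_(i in I) (c%:E * a i) <= c%:E * \esum_(i in I) a i.
Proof.
move=> c0 a0; apply: ge_ereal_sup => _ [X XI <-].
rewrite -ge0_mule_fsumr //; apply: lee_wpmul2l; first by rewrite lee_fin.
by apply: esum_ge; exists X.
Qed.

Section blocks.
Variable R : realType.
Local Notation mu := (@lebesgue_measure R).

Lemma measurable_Ik k : measurable (@Ik R k).
Proof. exact: measurable_itv. Qed.

Lemma lebesgue_measure_Ik k : mu (@Ik R k) = 1.
Proof.
rewrite /Ik lebesgue_measure_itv /= lte_fin ltrDl ltr01 -EFinB.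
by congr EFin; lra.
Qed.

Lemma Ik_inj j k x : @Ik R j x -> @Ik R k x -> j = k.
Proof.
rewrite /Ik /= !in_itv /= => /andP[jx xj1] /andP[kx xk1].
have : (j%:~R < (k + 1)%:~R :> R)%R by rewrite intrD; apply: le_lt_trans jx xk1.
have : (k%:~R < (j + 1)%:~R :> R)%R by rewrite intrD; apply: le_lt_trans kx xj1.
rewrite !ltr_int; lia.
Qed.

Lemma Ik_floor x : @Ik R (Num.floor x) x.
Proof.
rewrite /Ik /= in_itv /= floor_le /=.
by have := real_floorD1_gt (num_real x); rewrite intrD.
Qed.

Lemma negligible_Ik_pieces (A : set R) :
  (forall k, mu.-negligible (A `&` Ik k)) -> mu.-negligible A.
Proof.
move=> Ak0.
pose F n := (A `&` @Ik R (Posz n)) `|` (A `&` @Ik R (Negz n)).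
have F0 : mu.-negligible (\bigcup_n F n).
  by apply: negligible_bigcup => n; apply: negligibleU.
apply: negligibleS F0 => x Ax; have := Ik_floor x.
by case: (Num.floor x) => n xn; exists n => //; [left | right].
Qed.

Lemma Linf_norm_ge0 (g : R -> R) : 0 <= Linf_norm g.
Proof.
apply: ess_sup_gee; last by apply: nearW => x; rewrite lee_fin.
apply: (@lt_le_trans _ _ (mu (@Ik R 0))); first by rewrite lebesgue_measure_Ik lte01.
by apply: le_measure; rewrite ?inE //; exact: measurable_Ik.
Qed.

Lemma measurable_normr_gt (g : R -> R) (N : R) : measurable_fun setT g ->
  measurable [set x | (N < `|g x|)%R].
Proof.
move=> mg; rewrite -[X in measurable X]setTI.
under eq_set do rewrite -lte_fin.
apply: measurable_lte => //.
by apply/measurable_EFinP; apply: measurableT_comp => //; exact: normr_measurable.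
Qed.

Lemma ess_sup_gt_block (g : R -> R) (N : R) : measurable_fun setT g ->
  N%:E < Linf_norm g -> exists k, 0 < mu ([set x | N < `|g x|]%R `&` Ik k).
Proof.
move=> mg NL; apply: contrapT => no_block.
suff : Linf_norm g <= N%:E by rewrite leNgt NL.
apply/ess_supP; apply: negligible_Ik_pieces => k.
exists ([set x | N < `|g x|]%R `&` Ik k); split => //.
- by apply: measurableI; [exact: measurable_normr_gt | exact: measurable_Ik].
- apply/eqP; rewrite eq_le measure_ge0 andbT leNgt; apply/negP => gk.
  by apply: no_block; exists k.
- by move=> x [/= gxN xk]; split => //; rewrite ltNge -lee_fin; apply/negP.
Qed.

End blocks.

Section cmod.
Variable R : realType.
Local Notation C := (complex.complex R).

Lemma measurable_cmod (f : R -> C) : cmeasurable f ->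
  measurable_fun setT (fun x => cmod (f x)).
Proof.
case=> mre mim.
have -> : (fun x => cmod (f x)) =
    (fun x => (complex.Re (f x) ^+ 2 + complex.Im (f x) ^+ 2) `^ (2^-1))%R.
  by apply/funext => x; rewrite /cmod powR12_sqrt // addr_ge0 // sqr_ge0.
apply: (measurableT_comp (measurable_powR _)).
by apply: measurable_funD; apply: measurable_funX.
Qed.

Lemma cmod_Mg (g : R -> R) (f : R -> C) x : cmod (Mg g f x) = (cmod (f x) * `|g x|)%R.
Proof.
rewrite /cmod /Mg /= !exprMn -mulrDl sqrtrM ?sqrtr_sqr //.
by apply: addr_ge0; apply: sqr_ge0.
Qed.

Lemma cmeasurable_Mg (g : R -> R) (f : R -> C) : measurable_fun setT g ->
  cmeasurable f -> cmeasurable (Mg g f).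
Proof. by move=> mg [mre mim]; split; apply: measurable_funM. Qed.

End cmod.

Section block_norm.
Variables (R : realType) (p q theta : R).
Hypotheses (p0 : (0 < p)%R) (q0 : (0 < q)%R).
Local Notation mu := (@lebesgue_measure R).
Local Notation C := (complex.complex R).
Local Notation gl := (gl_norm p q theta).

Lemma loc_int_ge0 (f : R -> C) k : 0 <= loc_int p f k.
Proof. by apply: integral_ge0 => x _; rewrite lee_fin powR_ge0. Qed.

Lemma gl_norm_le (f1 f2 : R -> C) (c : R) : (0 <= c)%R ->
  (forall k, loc_int p f1 k <= (c `^ p)%:E * loc_int p f2 k) ->
  gl f1 <= c%:E * gl f2.
Proof.
move=> c0 f12; apply: ge_ereal_sup => _ [eps /= eps0 <-].
set r := (q * (1 + eps) / p)%R; set s := (1 / (q * (1 + eps)))%R.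
have e0 : (0 < 1 + eps)%R by rewrite addr_gt0.
have qe0 : (0 < q * (1 + eps))%R by rewrite mulr_gt0.
have r0 : (0 <= r)%R by rewrite ltW // divr_gt0.
have s0 : (0 <= s)%R by rewrite ltW // divr_gt0.
set c' := ((c `^ p) `^ r)%R.
have c'c : (c' `^ s = c)%R.
  have prs : (p * (r * s) = 1)%R by rewrite /r /s; field; rewrite !gt_eqF.
  by rewrite /c' -!powRrM prs powRr1.
pose S2 := \esum_(k in [set: int]) loc_int p f2 k `^ r.
have S20 : 0 <= S2 by apply: esum_ge0 => k _; apply: poweR_ge0.
have et0 : 0 <= (eps `^ theta)%:E by rewrite lee_fin powR_ge0.
have S12 : \esum_(k in [set: int]) loc_int p f1 k `^ r <= c'%:E * S2.
  apply: (@le_trans _ _ (\esum_(k in [set: int]) (c'%:E * loc_int p f2 k `^ r))).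
    apply: le_esum => k _.
    rewrite /c' -poweR_EFin -poweRM ?lee_fin ?powR_ge0 ?loc_int_ge0 //.
    by apply: ge0_le_poweR => //; exact: loc_int_ge0.
  by apply: le_esumZl; [exact: powR_ge0 | move=> k; exact: poweR_ge0].
apply: (@le_trans _ _ ((c'%:E * ((eps `^ theta)%:E * S2)) `^ s)).
  apply: (ge0_le_poweR s0); last by rewrite muleCA; apply: lee_wpmul2l.
  apply: mule_ge0 et0 _.
  by apply: esum_ge0 => k _; exact: poweR_ge0.
rewrite poweRM ?mule_ge0 ?lee_fin ?powR_ge0 // poweR_EFin c'c.
by apply: lee_wpmul2l; [rewrite lee_fin | apply: ereal_sup_ubound; exists eps].
Qed.

Lemma gl_norm_ge0 (f : R -> C) : 0 <= gl f.
Proof.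
apply: le_trans (poweR_ge0 _ _) _; apply: ereal_sup_ubound.
by exists 1%R; rewrite /= ?ltr01.
Qed.

Lemma gl_norm_gt0 (f : R -> C) k : 0 < loc_int p f k -> 0 < gl f.
Proof.
move=> fk0; apply: (@lt_le_trans _ _ (((1 `^ theta)%:E *
    \esum_(k in [set: int]) loc_int p f k `^ (q * (1 + 1) / p)) `^ (1 / (q * (1 + 1))))).
  apply: poweR_gt0; rewrite powR1 mul1e.
  apply: (@lt_le_trans _ _ (loc_int p f k `^ (q * (1 + 1) / p))).
    exact: poweR_gt0.
  by apply: esum_ge; exists [set k]; rewrite ?fsbig_set1.
by apply: ereal_sup_ubound; exists 1%R => //=; rewrite ltr01.
Qed.

(* The weight eps^theta is compensated by the exponent 1/(q(1+eps)):
   theta ln eps / (q(1+eps)) <= theta/q since ln eps <= eps. *)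
Lemma gl_norm_block_le (f : R -> C) k0 : (0 <= theta)%R ->
  (forall k, k != k0 -> loc_int p f k = 0) -> loc_int p f k0 <= 1 ->
  gl f <= (expR (theta / q))%:E.
Proof.
move=> th0 f0 fk0; apply: ge_ereal_sup => _ [eps /= eps0 <-].
set r := (q * (1 + eps) / p)%R; set s := (1 / (q * (1 + eps)))%R.
have qe0 : (0 < q * (1 + eps))%R by rewrite mulr_gt0 // addr_gt0.
have r0 : (0 < r)%R by rewrite divr_gt0.
have s0 : (0 <= s)%R by rewrite ltW // divr_gt0.
have sum_le1 : \esum_(k in [set: int]) loc_int p f k `^ r <= 1.
  rewrite (eq_esum (b := fun k => if k \in [set k0] then loc_int p f k `^ r else 0)).
    rewrite -esum_mkcond esum_set1; last exact: poweR_ge0.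
    by rewrite -(poweR1r r); apply: ge0_le_poweR (ltW r0) (loc_int_ge0 _ _) fk0.
  move=> k _; have [->|kk0] := eqVneq k k0; first by rewrite mem_set.
  rewrite memNset; last by move=> kE; rewrite kE eqxx in kk0.
  by rewrite f0 // poweR0r // gt_eqF.
apply: (@le_trans _ _ ((eps `^ theta)%:E `^ s)).
  have et0 : 0 <= (eps `^ theta)%:E by rewrite lee_fin powR_ge0.
  apply: ge0_le_poweR s0 _ _.
    by apply: mule_ge0 et0 _; apply: esum_ge0 => k _; exact: poweR_ge0.
  by rewrite -[X in _ <= X]mule1; apply: lee_wpmul2l.
rewrite poweR_EFin -powRrM lee_fin /powR gt_eqF // ler_expR.
have eps_s : (s * eps <= q^-1)%R.
  rewrite /s mul1r mulrC ler_pdivrMr // mulrA mulVf ?gt_eqF // mul1r; lra.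
apply: (@le_trans _ _ (theta * s * eps)%R).
  by apply: ler_wpM2l; [rewrite mulr_ge0 | exact/ltW/ln_sublinear].
by rewrite -mulrA; apply: ler_wpM2l.
Qed.

Lemma measurable_powR_cmod (f : R -> C) (D : set R) : cmeasurable f ->
  measurable_fun D (fun x => ((cmod (f x)) `^ p)%:E).
Proof.
move=> mf; apply: measurable_funTS; apply/measurable_EFinP.
exact: (measurableT_comp (measurable_powR p) (measurable_cmod mf)).
Qed.

Lemma loc_int_Mg_le (g : R -> R) (f : R -> C) (c : R) k :
  measurable_fun setT g -> cmeasurable f -> (0 <= c)%R -> Linf_norm g <= c%:E ->
  loc_int p (Mg g f) k <= (c `^ p)%:E * loc_int p f k.
Proof.
move=> mg mf c0 /ess_supP [N [mN N0 gN]].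
rewrite /loc_int -ge0_integralZl_EFin; last 4 first.
- exact: measurable_Ik.
- by move=> x _; rewrite lee_fin powR_ge0.
- exact: measurable_powR_cmod.
- exact: powR_ge0.
apply: ae_ge0_le_integral.
- exact: measurable_Ik.
- by move=> x _; rewrite lee_fin powR_ge0.
- exact: (measurable_powR_cmod (cmeasurable_Mg mg mf)).
- by move=> x _; rewrite mule_ge0 // lee_fin powR_ge0.
- by apply: emeasurable_funM; [exact: measurable_cst | exact: measurable_powR_cmod].
exists N; split => // x /= gx; apply: gN => /= gxc; apply: gx => _.
rewrite cmod_Mg powRM ?normr_ge0 ?sqrtr_ge0 // -EFinM lee_fin mulrC.
rewrite ler_wpM2r ?powR_ge0 //.
by apply: ge0_ler_powR; rewrite ?nnegrE ?normr_ge0 ?(ltW p0) // -lee_fin.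
Qed.

Lemma gl_norm_Mg_le (g : R -> R) (c : R) : measurable_fun setT g ->
  (0 <= c)%R -> Linf_norm g <= c%:E ->
  forall f, cmeasurable f -> gl (Mg g f) <= c%:E * gl f.
Proof.
by move=> mg c0 gc f mf; apply: gl_norm_le => // k; exact: loc_int_Mg_le.
Qed.

Lemma in_gl_Mg (g : R -> R) (c : R) : measurable_fun setT g ->
  (0 <= c)%R -> Linf_norm g <= c%:E ->
  forall f, in_gl p q theta f -> in_gl p q theta (Mg g f).
Proof.
move=> mg c0 gc f [mf [f_loc f_gl]]; split; first exact: cmeasurable_Mg.
split => [k|].
  apply: le_lt_trans (loc_int_Mg_le k mg mf c0 gc) _.
  by apply: lte_mul_pinfty; rewrite ?lee_fin ?powR_ge0.
apply: le_lt_trans (gl_norm_Mg_le mg c0 gc mf) _.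
by apply: lte_mul_pinfty; rewrite ?lee_fin.
Qed.

Definition cindic (E : set R) : R -> C := fun x => complex.Complex (\1_E x) 0%R.

Lemma powR_cmod_cindic E x : ((cmod (cindic E x)) `^ p)%R = \1_E x.
Proof.
rewrite /cmod /cindic /= expr0n /= addr0 sqrtr_sqr indicE.
by case: (x \in E); rewrite /= ?normr1 ?normr0 ?powR1 ?powR0 ?gt_eqF.
Qed.

Lemma cmeasurable_cindic E : measurable E -> cmeasurable (cindic E).
Proof. by move=> mE; split; [exact: measurable_indic | exact: measurable_cst]. Qed.

Lemma loc_int_cindic E k : measurable E -> loc_int p (cindic E) k = mu (E `&` Ik k).
Proof.
move=> mE; rewrite /loc_int.
under eq_integral do rewrite powR_cmod_cindic.
by rewrite integral_indic //; exact: measurable_Ik.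
Qed.

Lemma gl_norm_cindic_le_Mg (E : set R) (g : R -> R) (N : R) :
  measurable E -> measurable_fun setT g -> (0 < N)%R ->
  (forall x, E x -> N < `|g x|)%R ->
  gl (cindic E) <= N^-1%:E * gl (Mg g (cindic E)).
Proof.
move=> mE mg N0 gN; have mf := cmeasurable_cindic mE.
apply: gl_norm_le; first by rewrite invr_ge0 ltW.
move=> k; rewrite /loc_int -ge0_integralZl_EFin; last 4 first.
- exact: measurable_Ik.
- by move=> x _; rewrite lee_fin powR_ge0.
- exact: (measurable_powR_cmod (cmeasurable_Mg mg mf)).
- exact: powR_ge0.
apply: ge0_le_integral.
- exact: measurable_Ik.
- by move=> x _; rewrite lee_fin powR_ge0.
- exact: measurable_powR_cmod.
- apply: emeasurable_funM; first exact: measurable_cst.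
  exact: (measurable_powR_cmod (cmeasurable_Mg mg mf)).
move=> x _; rewrite cmod_Mg powRM ?normr_ge0 ?sqrtr_ge0 // -EFinM lee_fin.
rewrite powR_cmod_cindic indicE.
case: (boolP (x \in E)) => xE /=; last by rewrite !mul0r mulr0.
rewrite mul1r -powRM ?invr_ge0 ?normr_ge0 ?(ltW N0) //.
apply: (@le_trans _ _ (1 `^ p)%R); first by rewrite powR1.
apply: ge0_ler_powR; rewrite ?nnegrE ?mulr_ge0 ?invr_ge0 ?ler01 ?(ltW p0) ?(ltW N0) //.
by rewrite mulrC ler_pdivlMr // mul1r ltW // gN // -inE.
Qed.

Section block_indicator.
Variables (E : set R) (k0 : int).
Hypotheses (mE : measurable E) (E_k0 : E `<=` Ik k0).

Lemma loc_int_cindic_off k : k != k0 -> loc_int p (cindic E) k = 0.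
Proof.
move=> kk0; rewrite loc_int_cindic // -(measure0 mu); congr (mu _).
apply/seteqP; split => x // [/E_k0 xk0 xk].
by move/eqP: kk0; apply; exact: Ik_inj xk xk0.
Qed.

Lemma loc_int_cindic_le1 : loc_int p (cindic E) k0 <= 1.
Proof.
rewrite loc_int_cindic // setIidl // -(lebesgue_measure_Ik R k0).
by apply: le_measure => //; rewrite inE //; exact: measurable_Ik.
Qed.

Lemma in_gl_cindic : (0 <= theta)%R -> in_gl p q theta (cindic E).
Proof.
move=> th0; split; first exact: cmeasurable_cindic.
split => [k|].
  have [->|kk0] := eqVneq k k0; last by rewrite loc_int_cindic_off ?ltry.
  by apply: le_lt_trans loc_int_cindic_le1 _; rewrite ltry.
apply: le_lt_trans (gl_norm_block_le th0 loc_int_cindic_off loc_int_cindic_le1) _.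
by rewrite ltry.
Qed.

Lemma gl_norm_cindic_gt0 : 0 < mu E -> 0 < gl (cindic E).
Proof.
by move=> E0; apply: (gl_norm_gt0 (k := k0)); rewrite loc_int_cindic // setIidl.
Qed.

Lemma Mg_bound_ge (g : R -> R) (N c : R) : (0 <= theta)%R ->
  measurable_fun setT g -> (0 < N)%R -> (forall x, E x -> N < `|g x|)%R ->
  0 < mu E ->
  (forall f, in_gl p q theta f -> gl (Mg g f) <= c%:E * gl f) ->
  (N <= c)%R.
Proof.
move=> th0 mg N0 gN E0 gc.
have G0 := gl_norm_cindic_gt0 E0.
have Gfin : gl (cindic E) \is a fin_num.
  by rewrite ge0_fin_numE ?ltW //; case: (in_gl_cindic th0) => _ [].
have := le_trans (gl_norm_cindic_le_Mg mE mg N0 gN)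
  (lee_wpmul2l (ltW _) (gc _ (in_gl_cindic th0))).
rewrite lte_fin invr_gt0 => /(_ N0).
rewrite muleA -EFinM -[X in X <= _]mul1e lee_pmul2r // lee_fin.
by rewrite mulrC ler_pdivlMr // mul1r.
Qed.

End block_indicator.

Lemma Linf_norm_le_Mg_bound (g : R -> R) (c : R) : (0 <= theta)%R ->
  measurable_fun setT g -> (0 <= c)%R ->
  (forall f, in_gl p q theta f -> gl (Mg g f) <= c%:E * gl f) ->
  Linf_norm g <= c%:E.
Proof.
move=> th0 mg c0 gc; apply/lee_addgt0Pr => e e0; rewrite leNgt; apply/negP => gce.
have [k gk] := ess_sup_gt_block mg gce.
have : (c + e <= c)%R.
  apply: (Mg_bound_ge (k0 := k) _ _ th0 mg _ _ gk gc) => //.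
  - by apply: measurableI; [exact: measurable_normr_gt | exact: measurable_Ik].
  - lra.
  - by move=> x [].
lra.
Qed.

End block_norm.

Theorem theorem4p1 (R : realType) (p q theta : R) (g : R -> R)
  (hp : (1 <= p)%R) (hq : (1 <= q)%R) (htheta : (0 < theta)%R)
  (gmeas : measurable_fun [set: R] g)
  (gcpt : exists M : R, forall x : R, (M < `|x|)%R -> g x = 0%R) :
  (Mg_bounded p q theta g <-> Linf_norm g < +oo) /\
  (Mg_bounded p q theta g -> Mg_opnorm p q theta g = Linf_norm g).
Proof.
have p0 : (0 < p)%R by apply: lt_le_trans ltr01 hp.
have q0 : (0 < q)%R by apply: lt_le_trans ltr01 hq.
have Linf_le := Linf_norm_le_Mg_bound p0 q0 (ltW htheta) gmeas.
have bounded_fin : Mg_bounded p q theta g -> Linf_norm g < +oo.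
  case=> _ [c gc]; apply: (le_lt_trans _ (ltry `|c|)); apply: Linf_le => // f f_gl.
  apply: le_trans (gc f f_gl) _.
  by apply: lee_wpmul2r; [exact: gl_norm_ge0 | rewrite lee_fin ler_norm].
suff fin_bounded : Linf_norm g < +oo ->
    Mg_bounded p q theta g /\ Mg_opnorm p q theta g = Linf_norm g.
  split; first by split => [|/fin_bounded[]].
  by move=> /bounded_fin/fin_bounded[].
move=> Lfin; have gE : Linf_norm g = (fine (Linf_norm g))%:E.
  by rewrite fineK // ge0_fin_numE ?Linf_norm_ge0.
set c := fine _ in gE.
have c0 : (0 <= c)%R by rewrite -lee_fin -gE Linf_norm_ge0.
have gc : Linf_norm g <= c%:E by rewrite gE.
have Mg_c := gl_norm_Mg_le theta p0 q0 gmeas c0 gc.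
split.
  split; first exact: (in_gl_Mg p0 q0 gmeas c0 gc).
  by exists c => f [mf _]; exact: Mg_c.
apply/eqP; rewrite eq_le; apply/andP; split.
  rewrite gE; apply: ereal_inf_lbound; exists c => //.
  by split => // f [mf _]; exact: Mg_c.
by apply: le_ereal_inf_tmp => _ [d [d0 gd] <-]; exact: Linf_le.
Qed.
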